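(* Let $O$ be a complete discrete valuation ring of characteristic $p$ with perfect residue field, fraction field $K$, which is an $\mathbb{F}_q$-algebra, and let $M\in\mathrm{Mod}_{O,\sigma}$. Suppose $a\in A[M]_K:=A[M]\otimes_OK$ satisfies $\delta^+a:=\Delta(a)-a\otimes1-1\otimes a\in A[M]\otimes_OA[M]$ and $[\alpha]a=\alpha a$ for all $\alpha\in\mathbb{F}_q$. Then there is $a'\in A[M]$ such that $\delta^+a=\delta^+a'$ and $a-a'\in M_K:=M\otimes_OK$.
   Context: $\sigma:O\to O$ is the $q$-th power map, $M_\sigma=M\otimes_{O,\sigma}O$. $\mathrm{Mod}_{O,\sigma}$: free $O$-modules $M$ of finite rank with $O$-linear $\Phi:M_\sigma\to M$ such that $\Phi\otimes K$ is an isomorphism. $A[M]=\mathrm{Sym}_OM/(\Phi(m\otimes1)-m^{\otimes q}:m\in M)$, a Hopf algebra with comultiplication $\Delta m=m\otimes1+1\otimes m$ and $\mathbb{F}_q$-action by algebra endomorphisms $[\alpha]m=\alpha m$ for $m\in M$; $M$ is identified with its image in $A[M]$. *)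

From mathcomp Require Import all_boot all_order all_algebra.
From mathcomp Require Export mpoly.
Set Implicit Arguments. Unset Strict Implicit. Unset Printing Implicit Defensive.
Import Order.TTheory GRing.Theory Num.Theory.
Local Open Scope ring_scope.

Section Valuation.
Variables (K : fieldType) (v : K -> int).

(* "x has valuation >= N" (with v 0 = +oo) *)
Definition vge (x : K) (N : int) : Prop := x = 0 \/ N <= v x.
Definition inO (x : K) : Prop := vge x 0.
Definition inm (x : K) : Prop := vge x 1.

Definition discrete_valuation : Prop :=
  [/\ forall x y, x != 0 -> y != 0 -> v (x * y) = v x + v y,
      forall x y, x != 0 -> y != 0 -> x + y != 0 -> Num.min (v x) (v y) <= v (x + y)
    & exists pi, pi != 0 /\ v pi = 1].

Definition vcomplete : Prop :=
  forall u : nat -> K,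
    (forall N : int, exists m, forall i j, (m <= i)%N -> (m <= j)%N -> vge (u i - u j) N) ->
    exists l, forall N : int, exists m, forall i, (m <= i)%N -> vge (u i - l) N.

(* the residue field O/m is perfect (of characteristic p): Frobenius onto *)
Definition perfect_residue (p : nat) : Prop :=
  forall x, inO x -> exists y, inO y /\ inm (y ^+ p - x).

Definition Opoly k (P : {mpoly K[k]}) : Prop := forall m, inO P@_m.
End Valuation.

Section Pres.
Variable (K : fieldType).

Definition in_ideal k (gs : seq {mpoly K[k]}) (P : {mpoly K[k]}) : Prop :=
  exists c : nat -> {mpoly K[k]}, P = \sum_(i < size gs) c i * gs`_i.

Definition congI k (gs : seq {mpoly K[k]}) (P Q : {mpoly K[k]}) : Prop :=
  in_ideal gs (P - Q).

(* For M = O^n with basis e_1..e_n and Phi(e_j (x) 1) = sum_i phi i j e_i,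
   the relations Phi(m (x) 1) - m^q of A[M] are generated by
   X_j^q - sum_i phi i j X_i, here in variables X_(e j). *)
Definition relsA n k (q : nat) (phi : 'M[K]_n) (e : 'I_n -> 'I_k) : seq {mpoly K[k]} :=
  [seq 'X_(e j) ^+ q - \sum_(i < n) phi i j *: 'X_(e i) | j <- enum 'I_n].

Definition relsM n q (phi : 'M[K]_n) : seq {mpoly K[n]} := relsA q phi id.
(* relations of A[M] (x) A[M] (variables X_1..X_n, Y_1..Y_n) *)
Definition relsMM n q (phi : 'M[K]_n) : seq {mpoly K[n + n]} :=
  relsA q phi (@lshift n n) ++ relsA q phi (@rshift n n).

(* delta^+ a = Delta a - a (x) 1 - 1 (x) a, on representatives *)
Definition deltap n (a : {mpoly K[n]}) : {mpoly K[n + n]} :=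
  (a \mPo [tuple 'X_(lshift n i) + 'X_(rshift n i) | i < n])
  - (a \mPo [tuple 'X_(lshift n i) | i < n])
  - (a \mPo [tuple 'X_(rshift n i) | i < n]).

(* [alpha] a, for alpha acting through the scalar c = alpha in K *)
Definition actF n (c : K) (a : {mpoly K[n]}) : {mpoly K[n]} :=
  (a \mPo [tuple c *: 'X_i | i < n]).
End Pres.

(* Present [A[M]_K] as [K[X_1, ..., X_n]] modulo the relations
   [X_j ^+ q = Phi_j(X)].  Replacing every [X_i ^+ q] by [Phi_i(X)] lowers the
   total degree, so iterating it maps each polynomial to a congruent "reduced"
   one (all exponents [< q]) and kills the ideal of relations.  Hence reduced
   representatives are unique, and since [Phi] is integral, the reduced
   representative of a class that has an integral representative is integral.
   Let [b] be the reduced representative of [a].  As [[alpha]] multiplies a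
   reduced monomial of degree [d] by [alpha ^+ d], and [alpha ^+ d != alpha]
   for some [alpha] when [d != 1] and [d < q], the coefficients of [b] in these
   degrees vanish.  [deltap b] is reduced and congruent to [deltap a], hence
   integral, and a monomial of [b] involving two distinct variables keeps its
   coefficient in a specialization of [deltap b]; the remaining monomials are
   powers [X_j ^+ d] with [d < q], which vanish unless [d = 1].  So [a'] is [b]
   minus its linear part. *)

From HB Require Import structures.
From mathcomp Require Import all_boot all_order all_algebra all_field.
From mathcomp Require Import mpoly ssrcomplements.
From Stdlib Require Import Lia.
From mathcomp Require Import zify ring.
Set Implicit Arguments. Unset Strict Implicit. Unset Printing Implicit Defensive.
Import Order.TTheory GRing.Theory Num.Theory.
Local Open Scope ring_scope.

Section ValuationRing.
Variables (K : fieldType) (v : K -> int).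
Hypothesis v_discrete : discrete_valuation v.

Definition vring : {pred K} := fun x => (x == 0) || (0 <= v x).

Lemma vringP x : reflect (inO v x) (x \in vring).
Proof. by rewrite unfold_in; apply: (iffP orP) => -[/eqP|]; by [left | right]. Qed.

Lemma valuation1 : v 1 = 0.
Proof.
case: v_discrete => vM _ _; have := vM 1 1 (oner_neq0 _) (oner_neq0 _).
by rewrite mulr1 => v11; apply: (addrI (v 1)); rewrite -v11 addr0.
Qed.

Lemma valuationN x : v (- x) = v x.
Proof.
case: v_discrete => vM _ _; have N10 : (-1 : K) != 0 by rewrite oppr_eq0 oner_neq0.
have vN1 : v (-1) = 0.
  by have := vM _ _ N10 N10; rewrite mulrNN mulr1 valuation1; lia.
have [->|x0] := eqVneq x 0; first by rewrite oppr0.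
by rewrite -mulN1r vM // vN1 add0r.
Qed.

Lemma vring_subring_closed : subring_closed vring.
Proof.
case: v_discrete => vM vD _; split.
- by rewrite unfold_in valuation1 lexx orbT.
- move=> x y; rewrite !unfold_in.
  have [->|x0] := eqVneq x 0; first by rewrite sub0r oppr_eq0 valuationN => _.
  have [->|y0] := eqVneq y 0; first by rewrite subr0 (negbTE x0).
  have [//|xy0] := eqVneq (x - y) 0.
  move=> /= vx vy; apply: le_trans (vD _ _ x0 _ xy0); rewrite ?oppr_eq0 //.
  by rewrite le_min valuationN vx vy.
- move=> x y; rewrite !unfold_in.
  have [->|x0] := eqVneq x 0; first by rewrite mul0r eqxx.
  have [->|y0] := eqVneq y 0; first by rewrite mulr0 eqxx.
  by rewrite mulf_eq0 (negbTE x0) (negbTE y0) /= vM //; apply: addr_ge0.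
Qed.

End ValuationRing.

Section IdealMembership.
Variables (K : fieldType) (k : nat) (gs : seq {mpoly K[k]}).
Implicit Types P Q : {mpoly K[k]}.

Lemma in_ideal0 : in_ideal gs 0.
Proof. by exists (fun=> 0); rewrite big1 // => i _; rewrite mul0r. Qed.

Lemma in_idealD P Q : in_ideal gs P -> in_ideal gs Q -> in_ideal gs (P + Q).
Proof.
move=> [c ->] [d ->]; exists (fun i => c i + d i).
by rewrite -big_split; apply: eq_bigr => i _; rewrite mulrDl.
Qed.

Lemma in_idealMl R P : in_ideal gs P -> in_ideal gs (R * P).
Proof.
move=> [c ->]; exists (fun i => R * c i).
by rewrite mulr_sumr; apply: eq_bigr => i _; rewrite mulrA.
Qed.

Lemma in_idealZ a P : in_ideal gs P -> in_ideal gs (a *: P).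
Proof. by rewrite -mul_mpolyC; apply: in_idealMl. Qed.

Lemma in_idealB P Q : in_ideal gs P -> in_ideal gs Q -> in_ideal gs (P - Q).
Proof.
by move=> IP IQ; rewrite -scaleN1r in IQ *; apply: in_idealD => //; apply: in_idealZ.
Qed.

Lemma in_ideal_sum (I : Type) (r : seq I) (Pr : pred I) (G : I -> {mpoly K[k]}) :
  (forall i, Pr i -> in_ideal gs (G i)) -> in_ideal gs (\sum_(i <- r | Pr i) G i).
Proof. by move=> IG; elim/big_ind: _ => //; [apply: in_ideal0 | apply: in_idealD]. Qed.

Lemma in_ideal_mem g : g \in gs -> in_ideal gs g.
Proof.
move=> gs_g; have lt_g : (index g gs < size gs)%N by rewrite index_mem.
exists (fun j => (j == index g gs)%:R); rewrite (bigD1 (Ordinal lt_g)) //=.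
rewrite eqxx mul1r nth_index // big1 ?addr0 // => j.
by rewrite -val_eqE /= => /negbTE->; rewrite mul0r.
Qed.

Lemma congI_refl P : congI gs P P.
Proof. by rewrite /congI subrr; apply: in_ideal0. Qed.

Lemma congI_sym P Q : congI gs P Q -> congI gs Q P.
Proof. by move=> IPQ; rewrite /congI -opprB -scaleN1r; apply: in_idealZ. Qed.

Lemma congIZ a P Q : congI gs P Q -> congI gs (a *: P) (a *: Q).
Proof. by rewrite /congI -scalerBr; apply: in_idealZ. Qed.

Lemma congI_trans P Q R : congI gs P Q -> congI gs Q R -> congI gs P R.
Proof. by move=> IPQ IQR; have := in_idealD IPQ IQR; rewrite addrA subrK. Qed.

Lemma congIM P1 P2 Q1 Q2 :
  congI gs P1 P2 -> congI gs Q1 Q2 -> congI gs (P1 * Q1) (P2 * Q2).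
Proof.
move=> IP IQ; rewrite /congI.
have -> : P1 * Q1 - P2 * Q2 = Q1 * (P1 - P2) + P2 * (Q1 - Q2) by ring.
by apply: in_idealD; apply: in_idealMl.
Qed.

Lemma congI_prod (I : Type) (r : seq I) (Pr : pred I) (G1 G2 : I -> {mpoly K[k]}) :
  (forall i, Pr i -> congI gs (G1 i) (G2 i)) ->
  congI gs (\prod_(i <- r | Pr i) G1 i) (\prod_(i <- r | Pr i) G2 i).
Proof.
move=> IG; elim/big_ind2: _ => //; first exact: congI_refl.
by move=> *; apply: congIM.
Qed.

Lemma congIX P Q e : congI gs P Q -> congI gs (P ^+ e) (Q ^+ e).
Proof.
move=> IPQ; elim: e => [|e IH]; first by rewrite !expr0; apply: congI_refl.
by rewrite !exprS; apply: congIM.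
Qed.

End IdealMembership.

Lemma in_ideal_subset (K : fieldType) k (gs hs : seq {mpoly K[k]}) P :
  {subset gs <= hs} -> in_ideal gs P -> in_ideal hs P.
Proof.
move=> sub_gs [c ->]; apply: in_ideal_sum => i _; apply: in_idealMl.
by apply/in_ideal_mem/sub_gs/mem_nth.
Qed.

Lemma in_ideal_comp (K : fieldType) k l (gs : seq {mpoly K[k]}) (hs : seq {mpoly K[l]})
    (t : k.-tuple {mpoly K[l]}) P :
  (forall g, g \in gs -> in_ideal hs (g \mPo t)) ->
  in_ideal gs P -> in_ideal hs (P \mPo t).
Proof.
move=> Igt [c ->]; rewrite rmorph_sum; apply: in_ideal_sum => i _.
by rewrite rmorphM; apply/in_idealMl/Igt/mem_nth.
Qed.

Section MonomialLinearExtension.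
Variables (R : ringType) (k : nat) (V : lmodType R) (F : 'X_{1..k} -> V).

Definition mlinext (p : {mpoly R[k]}) : V := \sum_(m <- msupp p) p@_m *: F m.

Lemma mlinextE p w : (msize p <= w)%N ->
  mlinext p = \sum_(m : 'X_{1..k < w}) p@_m *: F m.
Proof.
move=> le_pw; rewrite /mlinext (big_mksub 'X_{1..k < w}) ?msupp_uniq //=; last first.
  by move=> m /msize_mdeg_lt /leq_trans; apply.
by rewrite big_rmcond //= => m /memN_msupp_eq0 ->; rewrite scale0r.
Qed.

Lemma mlinext_is_linear : linear mlinext.
Proof.
move=> c p1 p2; pose w := (msize p1 + msize p2)%N.
have le1 : (msize p1 <= w)%N by rewrite leq_addr.
have le2 : (msize p2 <= w)%N by rewrite leq_addl.
have le12 : (msize (c *: p1 + p2) <= w)%N.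
  apply: leq_trans (msizeD_le _ _) _; rewrite geq_max le2 andbT.
  exact: leq_trans (msizeZ_le _ _) le1.
rewrite !(mlinextE le1, mlinextE le2, mlinextE le12) scaler_sumr -big_split.
by apply: eq_bigr => m _; rewrite mcoeffD mcoeffZ scalerDl scalerA.
Qed.

HB.instance Definition _ :=
  GRing.isLinear.Build R {mpoly R[k]} V _ mlinext mlinext_is_linear.

Lemma mlinextX m : mlinext 'X_[m] = F m.
Proof. by rewrite /mlinext msuppX big_seq1 mcoeffX eqxx scale1r. Qed.

End MonomialLinearExtension.

Section BoundedSupport.
Variables (R : ringType) (k : nat).
Implicit Types (B m : 'X_{1..k}) (P Q : {mpoly R[k]}).

Definition mbounded B P := all (fun m => (m <= B)%MM) (msupp P).

Lemma mboundedD B P Q : mbounded B P -> mbounded B Q -> mbounded B (P + Q).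
Proof.
move=> /allP bP /allP bQ; apply/allP => m /msuppD_le.
by rewrite mem_cat => /orP[/bP|/bQ].
Qed.

Lemma mboundedZ B c P : mbounded B P -> mbounded B (c *: P).
Proof. by move/allP=> bP; apply/allP => m /msuppZ_le /bP. Qed.

Lemma mboundedB B P Q : mbounded B P -> mbounded B Q -> mbounded B (P - Q).
Proof. by move=> bP bQ; rewrite -scaleN1r; apply/mboundedD/mboundedZ. Qed.

Lemma mbounded_sum B (I : Type) (r : seq I) (Pr : pred I) (G : I -> {mpoly R[k]}) :
  (forall i, Pr i -> mbounded B (G i)) -> mbounded B (\sum_(i <- r | Pr i) G i).
Proof.
move=> bG; elim/big_ind: _ => //; last exact: mboundedD.
by rewrite /mbounded msupp0.
Qed.

Lemma mboundedW B B' P : (B <= B')%MM -> mbounded B P -> mbounded B' P.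
Proof. by move=> leB /allP bP; apply/allP => m /bP /lepm_trans; apply. Qed.

Lemma mboundedX m : mbounded m 'X_[m].
Proof. by rewrite /mbounded msuppX /= lepm_refl. Qed.

Lemma mboundedM B1 B2 P Q :
  mbounded B1 P -> mbounded B2 Q -> mbounded (B1 + B2) (P * Q).
Proof.
move=> /allP bP /allP bQ; apply/allP => m.
move=> /msuppM_le /allpairsP[[m1 m2] /= [Pm1 Qm2 ->]].
apply/mnm_lepP => i; rewrite !mnmDE leq_add //.
  exact/mnm_lepP/bP.
exact/mnm_lepP/bQ.
Qed.

Lemma mbounded_prod (I : Type) (r : seq I) (Pr : pred I)
    (B : I -> 'X_{1..k}) (G : I -> {mpoly R[k]}) :
  (forall i, Pr i -> mbounded (B i) (G i)) ->
  mbounded (\big[+%MM/0%MM]_(i <- r | Pr i) B i) (\prod_(i <- r | Pr i) G i).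
Proof.
move=> bG; elim/big_ind2: _ => //; last by move=> *; apply: mboundedM.
by rewrite /mbounded msupp1 /= lepm_refl.
Qed.

Lemma mboundedXn B P e : mbounded B P -> mbounded (B *+ e) (P ^+ e).
Proof.
move=> bP; elim: e => [|e IH]; first by rewrite expr0 /mbounded msupp1 /= lepm_refl.
by rewrite exprS mulmS; apply: mboundedM.
Qed.

End BoundedSupport.

Arguments mboundedX {R k} m.

Section Reduction.
Variables (K : fieldType) (k q : nat) (psi : 'M[K]_k).
Hypothesis q_gt1 : (1 < q)%N.
Local Notation PK := {mpoly K[k]}.
Implicit Types (m : 'X_{1..k}) (p : PK).

Let q_gt0 : (0 < q)%N. Proof. exact: ltnW. Qed.

Definition PhiX (j : 'I_k) : PK := \sum_(i < k) psi i j *: 'X_i.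
Definition relator j : PK := 'X_j ^+ q - PhiX j.
Definition relators := [seq relator j | j <- enum 'I_k].

Lemma relator_in_ideal j : in_ideal relators (relator j).
Proof. by apply/in_ideal_mem/map_f; rewrite mem_enum. Qed.

Definition mmodq m := [multinom (m i %% q)%N | i < k].
Definition mdivq m := [multinom (m i %/ q)%N | i < k].
Definition mbox := [multinom q.-1 | i < k].
Definition reduced p := mbounded mbox p.

Lemma le_mboxP m : reflect (forall i, m i < q)%N (m <= mbox)%MM.
Proof. by apply: (iffP mnm_lepP) => le_m i; move: (le_m i); rewrite mnmE; lia. Qed.

Lemma mnm_modq_divq m : m = (mmodq m + mdivq m *+ q)%MM.
Proof. by apply/mnmP => i; rewrite mnmDE mulmnE !mnmE addnC -divn_eq. Qed.

Lemma mdeg_modq_divq m : mdeg m = (mdeg (mmodq m) + q * mdeg (mdivq m))%N.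
Proof. by rewrite {1}[m]mnm_modq_divq mdegD mdegMn mulnC. Qed.

Lemma mmodq_divq_unique m r d : (r <= mbox)%MM -> m = (r + d *+ q)%MM ->
  mmodq m = r /\ mdivq m = d.
Proof.
move=> /le_mboxP lt_r ->; split; apply/mnmP => i; rewrite mnmE !(mnmDE, mulmnE) addnC.
  by rewrite modnMDl modn_small.
by rewrite divnMDl // divn_small ?addn0.
Qed.

(* [X^m = X^(m mod q) * \prod_i (X_i ^+ q) ^+ (m_i div q)], with each [X_i ^+ q]
   replaced by [PhiX i]. *)
Definition reduce_mono m : PK := 'X_[mmodq m] * mmap1 PhiX (mdivq m).
Definition reduce : {linear PK -> PK} := mlinext reduce_mono.
Fixpoint reduceN d : {linear PK -> PK} :=
  if d is d'.+1 then (reduceN d' \o reduce)%FUN else idfun.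

Lemma reduceNS d p : reduceN d.+1 p = reduceN d (reduce p).
Proof. by []. Qed.

Lemma reduceX m : reduce 'X_[m] = reduce_mono m.
Proof. exact: mlinextX. Qed.

Lemma reduce_mono_id m : (m <= mbox)%MM -> reduce_mono m = 'X_[m].
Proof.
move=> le_m; rewrite /reduce_mono; have [-> ->] : mmodq m = m /\ mdivq m = 0%MM.
  by apply: mmodq_divq_unique => //; apply/mnmP => i; rewrite mnmDE mulmnE mnm0E addn0.
by rewrite mmap11 mulr1.
Qed.

Lemma reduce_id p : reduced p -> reduce p = p.
Proof.
move=> /allP red_p; rewrite /reduce /mlinext [RHS]mpolyE.
by apply: eq_big_seq => m /red_p le_m; rewrite reduce_mono_id.
Qed.

Lemma reduceN_id d p : reduced p -> reduceN d p = p.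
Proof. by move=> red_p; elim: d => // d IH; rewrite reduceNS reduce_id. Qed.

Lemma msizeM_leq (p r : PK) a b :
  (msize p <= a.+1)%N -> (msize r <= b.+1)%N -> (msize (p * r) <= (a + b).+1)%N.
Proof.
have [->|p0] := eqVneq p 0; first by rewrite mul0r msize0.
have [->|r0] := eqVneq r 0; first by rewrite mulr0 msize0.
have p_gt0 : (0 < msize p)%N by rewrite lt0n msize_poly_eq0.
have r_gt0 : (0 < msize r)%N by rewrite lt0n msize_poly_eq0.
rewrite msizeM //; move: p_gt0 r_gt0; set x := msize p; set y := msize r; lia.
Qed.

Lemma msize_mmap1_PhiX w : (msize (mmap1 PhiX w) <= (mdeg w).+1)%N.
Proof.
have msize_PhiX j : (msize (PhiX j) <= 2)%N.
  apply: leq_trans (msize_sum _ _ _) _; apply/bigmax_leqP => l _.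
  by apply: leq_trans (msizeZ_le _ _) _; rewrite msizeX mdeg1.
rewrite /mmap1 mdegE.
apply: (big_ind2 (fun (P : PK) a => msize P <= a.+1)%N); first by rewrite msize1.
  by move=> p1 a1 p2 a2 le1 le2; apply: (msizeM_leq le1 le2).
move=> i _; elim: (w i) => [|e IH]; first by rewrite expr0 msize1.
by rewrite exprS; apply: (msizeM_leq (msize_PhiX i) IH).
Qed.

Lemma msize_Xmmap1_PhiX m w :
  (msize ('X_[m] * mmap1 PhiX w) <= (mdeg m + mdeg w).+1)%N.
Proof. by apply: msizeM_leq (msize_mmap1_PhiX w); rewrite msizeX. Qed.

Lemma mdeg_reduce_cofactor m : ~~ (m <= mbox)%MM ->
  (mdeg (mmodq m) + mdeg (mdivq m) < mdeg m)%N.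
Proof.
case/le_mboxP/forallP/forallPn => i; rewrite -leqNgt => le_qm.
have : (0 < mdeg (mdivq m))%N.
  by rewrite mdegE (bigD1 i) //= mnmE ltn_addr // divn_gt0.
rewrite [mdeg m]mdeg_modq_divq; nia.
Qed.

Lemma mmodq_split_top m l : mmodq m l = q.-1 ->
  mmodq m = (mmodq m - U_(l) *+ q.-1 + U_(l) *+ q.-1)%MM.
Proof.
move=> top; apply/mnmP => i; rewrite !(mnmDE, mnmBE, mulmnE, mnm1E).
by case: eqP => [<-|_]; rewrite ?top; lia.
Qed.

Lemma mdeg_top_cofactor m l : mmodq m l = q.-1 ->
  (mdeg (mmodq m - U_(l) *+ q.-1) + mdeg (mdivq m) < mdeg m)%N.
Proof.
move=> top; rewrite [mdeg m]mdeg_modq_divq {2}(mmodq_split_top top).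
rewrite mdegD mdegMn mdeg1 mul1n.
have : (mdeg (mdivq m) <= q * mdeg (mdivq m))%N by rewrite leq_pmull.
lia.
Qed.

Lemma reduce_monoDq m j : reduce_mono (m + U_(j) *+ q) = reduce_mono m * PhiX j.
Proof.
rewrite /reduce_mono.
have [-> ->] : mmodq (m + U_(j) *+ q) = mmodq m /\
               mdivq (m + U_(j) *+ q) = (mdivq m + U_(j))%MM.
  apply: mmodq_divq_unique; first by apply/le_mboxP => i; rewrite mnmE ltn_pmod.
  apply/mnmP => i; rewrite {1}[m]mnm_modq_divq !(mnmDE, mulmnE); lia.
by rewrite commr_mmap1_M ?mmap1U ?mulrA // => i x; apply: mulrC.
Qed.

Lemma reduce_mono_mulX m l :
  reduce_mono m * 'X_l - reduce_mono (m + U_(l)) =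
  if mmodq m l == q.-1 then
    'X_[mmodq m - U_(l) *+ q.-1] * mmap1 PhiX (mdivq m) * relator l
  else 0.
Proof.
have lt_mod i : (mmodq m i < q)%N by rewrite mnmE ltn_pmod.
rewrite /reduce_mono.
case: eqP => [top|low].
- have [-> ->] : mmodq (m + U_(l)) = (mmodq m - U_(l) *+ q.-1)%MM /\
                 mdivq (m + U_(l)) = (mdivq m + U_(l))%MM.
    apply: mmodq_divq_unique.
      by apply/le_mboxP => i; rewrite mnmBE; apply: leq_ltn_trans (leq_subr _ _) _.
    apply/mnmP => i; rewrite {1}[m]mnm_modq_divq !(mnmDE, mnmBE, mulmnE, mnm1E).
    by case: eqP => [<-|_]; rewrite ?top; lia.
  rewrite {1}(mmodq_split_top top) mpolyXD -mpolyXn commr_mmap1_M ?mmap1U /relator;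
    last by move=> i x; apply: mulrC.
  by rewrite -[in 'X_l ^+ q](prednK q_gt0) exprSr; ring.
- have [-> ->] : mmodq (m + U_(l)) = (mmodq m + U_(l))%MM /\
                 mdivq (m + U_(l)) = mdivq m.
    apply: mmodq_divq_unique.
      apply/le_mboxP => i; rewrite mnmDE mnm1E; have := lt_mod i.
      by case: eqP => [<-|_]; lia.
    by apply/mnmP => i; rewrite {1}[m]mnm_modq_divq !(mnmDE, mulmnE, mnm1E); lia.
  by rewrite mpolyXD mulrAC subrr.
Qed.

(* The cofactors on the right have smaller degree than [X^m]
   (mdeg_top_cofactor), so iterating [reduce] kills the ideal of relations. *)
Lemma reduce_mulX_relator m j :
  reduce ('X_[m] * relator j) =
  \sum_(l < k | mmodq m l == q.-1)
     psi l j *: ('X_[mmodq m - U_(l) *+ q.-1] * mmap1 PhiX (mdivq m) * relator l).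
Proof.
have -> : 'X_[m] * relator j =
          'X_[m + U_(j) *+ q] - \sum_(l < k) psi l j *: 'X_[m + U_(l)].
  rewrite /relator mulrBr /PhiX mulr_sumr mpolyXD mpolyXn; congr (_ - _).
  by apply: eq_bigr => l _; rewrite -scalerAr -mpolyXD.
rewrite linearB (linear_sum reduce) reduceX reduce_monoDq [PhiX j]/PhiX.
rewrite mulr_sumr -sumrB [RHS]big_mkcond.
apply: eq_bigr => l _; rewrite linearZ_LR reduceX -scalerAr -scalerBr reduce_mono_mulX.
by case: ifP; rewrite ?scaler0.
Qed.

Lemma reduceN_mul_relator d c j : (msize c <= d)%N -> reduceN d (c * relator j) = 0.
Proof.
elim: d c j => [|d IH] c j le_cd.
  by move: le_cd; rewrite leqn0 msize_poly_eq0 => /eqP->; rewrite mul0r linear0.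
rewrite [c]mpolyE mulr_suml linear_sum big1_seq // => m /andP[_ supp_m].
rewrite -scalerAl linearZ_LR reduceNS reduce_mulX_relator linear_sum big1 ?scaler0 //.
move=> l top_l; rewrite linearZ_LR IH ?scaler0 //.
apply: leq_trans (msize_Xmmap1_PhiX _ _) _.
have := mdeg_top_cofactor (eqP top_l).
by have := leq_trans (msize_mdeg_lt supp_m) le_cd; lia.
Qed.

Lemma reduceN_reduced d p : (msize p <= d)%N -> reduced (reduceN d p).
Proof.
elim: d p => [|d IH] p le_pd.
  move: le_pd; rewrite leqn0 msize_poly_eq0 => /eqP->.
  by rewrite linear0 /reduced /mbounded msupp0.
rewrite [p]mpolyE linear_sum big_seq; apply: mbounded_sum => m supp_m.
rewrite linearZ_LR; apply: mboundedZ; have [le_m|gt_m] := boolP (m <= mbox)%MM.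
  by have redX : reduced 'X_[m] := mboundedW le_m (mboundedX m); rewrite reduceN_id.
rewrite reduceNS reduceX; apply: IH; apply: leq_trans (msize_Xmmap1_PhiX _ _) _.
have := mdeg_reduce_cofactor gt_m.
by have := leq_trans (msize_mdeg_lt supp_m) le_pd; lia.
Qed.

Lemma congI_reduce p : congI relators p (reduce p).
Proof.
rewrite /congI {1}[p]mpolyE /reduce /= /mlinext -sumrB; apply: in_ideal_sum => m _.
rewrite -scalerBr; apply: in_idealZ; rewrite /reduce_mono {1}[m]mnm_modq_divq mpolyXD.
apply: congIM; first exact: congI_refl.
rewrite mpolyXE_id /mmap1; apply: congI_prod => i _.
by rewrite mulmnE mulnC exprM; apply: congIX; apply: relator_in_ideal.
Qed.

Lemma congI_reduceN d p : congI relators p (reduceN d p).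
Proof.
elim: d p => [|d IH] p; first exact: congI_refl.
by rewrite reduceNS; apply: congI_trans (congI_reduce p) (IH _).
Qed.

Lemma reduceN_ideal_eq0 p : in_ideal relators p -> exists d, reduceN d p = 0.
Proof.
move=> [c ->]; exists (\sum_(i < size relators) msize (c i))%N.
rewrite linear_sum big1 // => i _; have /mapP[j _ ->] := mem_nth 0 (ltn_ord i).
by apply: reduceN_mul_relator; rewrite (bigD1 i) //= leq_addr.
Qed.

Lemma reduced_ideal_eq0 p : reduced p -> in_ideal relators p -> p = 0.
Proof. by move=> red_p /reduceN_ideal_eq0[d]; rewrite reduceN_id. Qed.

Lemma reduceN_over (S : semiringClosed K) d p : (forall i j, psi i j \in S) ->
  p \in mpolyOver k S -> reduceN d p \in mpolyOver k S.
Proof.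
move=> psiS; have PhiX_S j : PhiX j \in mpolyOver k S.
  by rewrite rpred_sum // => i _; rewrite mpolyOverZ ?mpolyOverX.
elim: d p => // d IH p /mpolyOverP Sp; rewrite reduceNS; apply: IH.
rewrite /reduce /= /mlinext rpred_sum // => m _; rewrite mpolyOverZ //.
by rewrite rpredM ?mpolyOverX // rpred_prod // => i _; rewrite rpredX.
Qed.

Lemma reduced_congI_over (S : semiringClosed K) P R : (forall i j, psi i j \in S) ->
  reduced P -> congI relators P R -> R \in mpolyOver k S -> P \in mpolyOver k S.
Proof.
move=> psiS redP /reduceN_ideal_eq0[d]; rewrite linearB reduceN_id // => /eqP.
by rewrite subr_eq0 => /eqP ->; apply: reduceN_over.
Qed.

End Reduction.

Section Substitution.
Variable K : fieldType.

Lemma comp_mpoly_sum k l (t : k.-tuple {mpoly K[l]}) (I : Type) (r : seq I)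
    (Pr : pred I) (G : I -> {mpoly K[k]}) :
  (\sum_(i <- r | Pr i) G i) \mPo t = \sum_(i <- r | Pr i) (G i \mPo t).
Proof. exact: raddf_sum. Qed.

Lemma comp_mpolyXn k l (t : k.-tuple {mpoly K[l]}) (P : {mpoly K[k]}) e :
  (P ^+ e) \mPo t = (P \mPo t) ^+ e.
Proof. exact: rmorphXn. Qed.

Lemma comp_mpolyA k l r (P : {mpoly K[k]}) (t1 : k.-tuple {mpoly K[l]})
    (t2 : l.-tuple {mpoly K[r]}) :
  (P \mPo t1) \mPo t2 = P \mPo [tuple tnth t1 i \mPo t2 | i < k].
Proof.
rewrite [P \mPo t1]comp_mpolyEX [RHS]comp_mpolyEX raddf_sum.
apply: eq_bigr => m _; rewrite /= comp_mpolyZ !comp_mpolyX rmorph_prod.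
by congr (_ *: _); apply: eq_bigr => i _; rewrite rmorphXn tnth_mktuple.
Qed.

Lemma comp_mpoly_over (S : semiringClosed K) k l (P : {mpoly K[k]})
    (t : k.-tuple {mpoly K[l]}) :
  P \in mpolyOver k S -> (forall i, tnth t i \in mpolyOver l S) ->
  P \mPo t \in mpolyOver l S.
Proof.
move=> /mpolyOverP SP St; rewrite comp_mpolyE rpred_sum // => m _.
by rewrite mpolyOverZ // rpred_prod // => i _; rewrite rpredX.
Qed.

Variable n : nat.
Implicit Types (S : pred 'I_n) (b : {mpoly K[n]}) (e m : 'X_{1..n}).

Definition mkeep S : n.-tuple {mpoly K[n]} := [tuple if S i then 'X_i else 0 | i < n].
Definition mnm_within S m := [forall i, ~~ S i ==> (m i == 0%N)].

Lemma comp_mkeepX S m : 'X_[m] \mPo mkeep S = if mnm_within S m then 'X_[m] else 0.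
Proof.
rewrite comp_mpolyX; case: ifPn => [/forallP Sm | /forallPn[i]].
  rewrite [RHS]mpolyXE_id; apply: eq_bigr => i _; rewrite tnth_mktuple.
  by case: ifPn => // /(implyP (Sm i)) /eqP ->; rewrite !expr0.
rewrite negb_imply => /andP[Si mi]; rewrite (bigD1 i) //= tnth_mktuple (negbTE Si).
by rewrite expr0n (negbTE mi) mul0r.
Qed.

Lemma mcoeff_comp_mkeep S b e : ~~ mnm_within S e -> (b \mPo mkeep S)@_e = 0.
Proof.
move=> Se; rewrite comp_mpolyEX raddf_sum big1 // => m _ /=.
rewrite comp_mkeepX mcoeffZ; case: ifP => [Sm|_]; last by rewrite mcoeff0 mulr0.
rewrite mcoeffX; case: eqP => [eq_me|]; last by rewrite mulr0.
by move: Se; rewrite -eq_me Sm.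
Qed.

End Substitution.

Arguments mkeep {K n} S.

Section Comultiplication.
Variables (K : fieldType) (n : nat).
Local Notation PX := {mpoly K[n]}.
Local Notation PXY := {mpoly K[n + n]}.
Implicit Types (b : PX) (e : 'X_{1..n}).

Lemma deltapB b1 b2 : deltap (b1 - b2) = deltap b1 - deltap b2.
Proof.
rewrite /deltap !comp_mpolyB.
set x1 := b1 \mPo _; set y1 := b1 \mPo _; set z1 := b1 \mPo _.
set x2 := b2 \mPo _; set y2 := b2 \mPo _; set z2 := b2 \mPo _.
by clearbody x1 y1 z1 x2 y2 z2; ring.
Qed.

Lemma deltap_linear (c : 'I_n -> K) : deltap (\sum_(i < n) c i *: 'X_i) = 0.
Proof.
rewrite /deltap !comp_mpoly_sum -!sumrB big1 // => i _.
rewrite !comp_mpolyZ !comp_mpolyXU -!tnth_nth !tnth_mktuple scalerDr.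
by rewrite [_ + c i *: _]addrC addrK subrr.
Qed.

Definition isolate (j : 'I_n) : (n + n).-tuple PX :=
  [tuple match split l with
         | inl i => if i == j then 'X_i else 0
         | inr i => if i == j then 0 else 'X_i
         end | l < n + n].

Lemma isolate_lshift j i : tnth (isolate j) (lshift n i) = if i == j then 'X_i else 0.
Proof. by rewrite tnth_mktuple (unsplitK (inl _ i)). Qed.

Lemma isolate_rshift j i : tnth (isolate j) (rshift n i) = if i == j then 0 else 'X_i.
Proof. by rewrite tnth_mktuple (unsplitK (inr _ i)). Qed.

Lemma deltap_isolate b j :
  deltap b \mPo isolate j = b - (b \mPo mkeep (pred1 j)) - (b \mPo mkeep (predC1 j)).
Proof.
have eq_comp (t1 t2 : n.-tuple PX) :
    (forall i, tnth t1 i = tnth t2 i) -> b \mPo t1 = b \mPo t2.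
  by move=> eq_t; congr (_ \mPo _); apply: eq_from_tnth.
rewrite /deltap !comp_mpolyB !comp_mpolyA.
rewrite [X in X - _ - _ = _](eq_comp _ [tuple 'X_i | i < n]) ?comp_mpoly_id => [|i].
  rewrite [X in _ - X - _ = _](eq_comp _ (mkeep (pred1 j))) => [|i].
    rewrite [X in _ - X = _](eq_comp _ (mkeep (predC1 j))) // => i.
    by rewrite !tnth_mktuple comp_mpolyXU -tnth_nth isolate_rshift /=; case: eqP.
  by rewrite !tnth_mktuple comp_mpolyXU -tnth_nth isolate_lshift.
rewrite !tnth_mktuple comp_mpolyD !comp_mpolyXU -!tnth_nth.
rewrite isolate_lshift isolate_rshift.
by case: eqP; rewrite ?addr0 ?add0r.
Qed.

Lemma mcoeff_deltap_isolate b e i j : i != j -> e i != 0%N -> e j != 0%N ->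
  (deltap b \mPo isolate j)@_e = b@_e.
Proof.
move=> ij ei ej; rewrite deltap_isolate !mcoeffB !mcoeff_comp_mkeep ?subr0 //.
  by apply/forallPn; exists j; rewrite /= eqxx.
by apply/forallPn; exists i; rewrite /= ij.
Qed.

Lemma isolate_over (S : semiringClosed K) (P : PXY) j :
  P \in mpolyOver (n + n) S -> P \mPo isolate j \in mpolyOver n S.
Proof.
move=> SP; apply: comp_mpoly_over => // l; rewrite tnth_mktuple.
by case: split => i; case: eqP; rewrite ?rpred0 ?mpolyOverX.
Qed.

Variable q : nat.

Lemma comp_reduced (t : n.-tuple PXY) b : reduced q b ->
  (forall i, mbounded (U_(lshift n i) + U_(rshift n i))%MM (tnth t i)) ->
  reduced q (b \mPo t).
Proof.
move=> /allP red_b bt; rewrite comp_mpolyE big_seq; apply: mbounded_sum => m supp_m.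
apply/mboundedZ/(mboundedW _ (mbounded_prod _ (fun i _ => mboundedXn (m i) (bt i)))).
have /mnm_lepP le_m := red_b m supp_m; apply/mnm_lepP => l; rewrite mnm_sumE mnmE.
case: (split_ordP l) => i0 ->; have := le_m i0; rewrite mnmE; apply: leq_trans;
  rewrite (bigD1 i0) //= big1 ?addn0 => [|i ne_i];
  by rewrite mulmnE mnmDE !mnm1E ?eq_lshift ?eq_rshift ?eq_lrshift ?eq_rlshift
             ?eqxx ?(negbTE ne_i) ?mul1n.
Qed.

Lemma deltap_reduced b : reduced q b -> reduced q (deltap b).
Proof.
have bX i : mbounded (U_(lshift n i) + U_(rshift n i))%MM ('X_(lshift n i) : PXY).
  exact: mboundedW (lem_addr _ _) (mboundedX _).
have bY i : mbounded (U_(lshift n i) + U_(rshift n i))%MM ('X_(rshift n i) : PXY).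
  exact: mboundedW (lem_addl _ _) (mboundedX _).
move=> red_b; rewrite /deltap; apply: mboundedB; first apply: mboundedB.
all: by apply: comp_reduced => // i; rewrite tnth_mktuple ?mboundedD.
Qed.

End Comultiplication.

Lemma mdeg_lt_single_support (k q : nat) (m : 'X_{1..k}) : (0 < q)%N ->
  (forall i, m i < q)%N ->
  ~~ [exists i, exists j, [&& i != j, m i != 0%N & m j != 0%N]] ->
  (mdeg m < q)%N.
Proof.
move=> q_gt0 lt_m /existsPn single.
have [/existsP[j mj]|/existsPn m0] := boolP [exists j, m j != 0%N].
  rewrite mdegE (bigD1 j) //= big1 ?addn0 // => i ij; apply/eqP.
  by have /existsPn/(_ j) := single i; rewrite ij mj andbT negbK.
by rewrite mdegE big1 // => i _; apply/eqP/negbNE/m0.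
Qed.

Lemma exists_expr_neq (F : finFieldType) (m : nat) :
  m != 1%N -> (m < #|F|)%N -> exists a : F, a ^+ m != a.
Proof.
case: m => [_ _|[//|m] _ lt_m]; first by exists 0; rewrite expr0 oner_neq0.
apply/existsP; apply: contraTT lt_m => /existsPn all_roots; rewrite -leqNgt.
pose P : {poly F} := 'X^(m.+2) - 'X.
have size_P : size P = m.+3.
  by rewrite size_polyDl ?size_polyXn // size_polyN size_polyX.
have P0 : P != 0 by rewrite -size_poly_eq0 size_P.
rewrite cardE -ltnS -size_P; apply: max_poly_roots P0 _ (enum_uniq _).
apply/allP => x _; rewrite rootE !hornerE.
by have /negbNE/eqP-> := all_roots x; rewrite subrr.
Qed.

Section FrobeniusModule.
Variables (K : fieldType) (p : nat) (F : finFieldType) (f : {rmorphism F -> K}).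
Variables (n : nat) (phi : 'M[K]_n).
Hypothesis pK : p \in [pchar K].
Local Notation q := #|F|.
Local Notation PX := {mpoly K[n]}.
Local Notation PXY := {mpoly K[n + n]}.
Implicit Types (c : K) (b P Q : PX) (e : 'X_{1..n}).

Lemma rmorph_expf_card (alpha : F) : f alpha ^+ q = f alpha.
Proof. by rewrite -rmorphXn expf_card. Qed.

Lemma exprD_card k (x y : {mpoly K[k]}) : (x + y) ^+ q = x ^+ q + y ^+ q.
Proof.
apply: exprDn_pchar; have pF : p \in [pchar F] by rewrite -(fmorph_pchar f).
rewrite (card_pprimeChar pF) (eq_pnat _ (pchar_lalg _)) (eq_pnat _ (pcharf_eq pK)).
by rewrite pnatX pnat_id ?(pcharf_prime pK).
Qed.

(* The relations of [A[M] (x) A[M]] are those of [A[M + M]], where [Phi] acts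
   diagonally on [M + M]. *)
Definition phi2 : 'M[K]_(n + n) := block_mx phi 0 0 phi.

Lemma phi2_entries (P : K -> Prop) :
  P 0 -> (forall i j, P (phi i j)) -> forall i j, P (phi2 i j).
Proof.
move=> P0 Pphi i j; rewrite /phi2.
by case: (split_ordP i) => i' ->; case: (split_ordP j) => j' ->;
  rewrite ?block_mxEul ?block_mxEur ?block_mxEdl ?block_mxEdr ?mxE.
Qed.

Lemma PhiX_phi2_lshift j :
  PhiX phi2 (lshift n j) = \sum_(i < n) phi i j *: ('X_(lshift n i) : PXY).
Proof.
rewrite /PhiX big_split_ord /= [X in _ + X]big1 ?addr0 => [|i _].
  by apply: eq_bigr => i _; rewrite /phi2 block_mxEul.
by rewrite /phi2 block_mxEdl mxE scale0r.
Qed.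

Lemma PhiX_phi2_rshift j :
  PhiX phi2 (rshift n j) = \sum_(i < n) phi i j *: ('X_(rshift n i) : PXY).
Proof.
rewrite /PhiX big_split_ord /= big1 ?add0r => [|i _].
  by apply: eq_bigr => i _; rewrite /phi2 block_mxEdr.
by rewrite /phi2 block_mxEur mxE scale0r.
Qed.

Lemma relsMM_relators : relsMM q phi =i relators q phi2.
Proof.
move=> g; rewrite mem_cat; apply/orP/mapP => [[]|[l _ ->]].
- case/mapP=> j _ ->; exists (lshift n j); first by rewrite mem_enum.
  by rewrite /relator PhiX_phi2_lshift.
- case/mapP=> j _ ->; exists (rshift n j); first by rewrite mem_enum.
  by rewrite /relator PhiX_phi2_rshift.
case: (split_ordP l) => j ->; [left | right]; apply/mapP; exists j;
  by rewrite ?mem_enum // /relator ?PhiX_phi2_lshift ?PhiX_phi2_rshift.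
Qed.

Lemma in_ideal_relsMM (P : PXY) :
  in_ideal (relsMM q phi) P <-> in_ideal (relators q phi2) P.
Proof. by split; apply: in_ideal_subset => g; rewrite relsMM_relators. Qed.

Lemma relator_comp k (t : n.-tuple {mpoly K[k]}) j :
  relator q phi j \mPo t = tnth t j ^+ q - \sum_(i < n) phi i j *: tnth t i.
Proof.
rewrite /relator /PhiX comp_mpolyB comp_mpolyXn comp_mpolyXU -tnth_nth comp_mpoly_sum.
by congr (_ - _); apply: eq_bigr => i _; rewrite comp_mpolyZ comp_mpolyXU -tnth_nth.
Qed.

Lemma deltap_in_ideal P :
  in_ideal (relators q phi) P -> in_ideal (relators q phi2) (deltap P).
Proof.
move=> IP; rewrite /deltap; apply: in_idealB; first apply: in_idealB.
all: apply: in_ideal_comp IP => _ /mapP[j _ ->]; rewrite relator_comp !tnth_mktuple.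
- rewrite exprD_card; under eq_bigr => i _ do rewrite tnth_mktuple scalerDr.
  rewrite big_split /= opprD addrACA; apply: in_idealD.
    by have := relator_in_ideal q phi2 (lshift n j); rewrite /relator PhiX_phi2_lshift.
  by have := relator_in_ideal q phi2 (rshift n j); rewrite /relator PhiX_phi2_rshift.
- under eq_bigr => i _ do rewrite tnth_mktuple.
  by have := relator_in_ideal q phi2 (lshift n j); rewrite /relator PhiX_phi2_lshift.
- under eq_bigr => i _ do rewrite tnth_mktuple.
  by have := relator_in_ideal q phi2 (rshift n j); rewrite /relator PhiX_phi2_rshift.
Qed.

Lemma congI_actF c P Q : c ^+ q = c ->
  congI (relators q phi) P Q -> congI (relators q phi) (actF c P) (actF c Q).
Proof.
move=> cq; rewrite /congI /actF -comp_mpolyB; apply: in_ideal_comp => _ /mapP[j _ ->].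
rewrite relator_comp tnth_mktuple exprZn cq.
under eq_bigr => i _ do rewrite tnth_mktuple scalerA mulrC -scalerA.
by rewrite -scaler_sumr -scalerBr; apply/in_idealZ/relator_in_ideal.
Qed.

Lemma mcoeff_actF c b e : (actF c b)@_e = b@_e * c ^+ mdeg e.
Proof.
rewrite /actF comp_mpolyEX raddf_sum /=.
rewrite (eq_bigr (fun m => b@_m * c ^+ mdeg m * (m == e)%:R)) => [|m _]; last first.
  rewrite comp_mpolyX; under eq_bigr => i _ do rewrite tnth_mktuple exprZn.
  by rewrite scaler_prod prodrXr -mdegE -mpolyXE_id scalerA mcoeffZ mcoeffX.
have [supp_e|supp'_e] := boolP (e \in msupp b).
  rewrite (bigD1_seq e) ?msupp_uniq //= eqxx mulr1 big1 ?addr0 // => m /negbTE->.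
  by rewrite mulr0.
rewrite memN_msupp_eq0 // mul0r big1_seq // => m /andP[_ supp_m].
by case: eqP => [eq_me|]; [move: supp'_e; rewrite -eq_me supp_m | rewrite mulr0].
Qed.

Lemma reduced_weight_eq0 b e : reduced q b ->
  (forall alpha : F, congI (relators q phi) (actF (f alpha) b) (f alpha *: b)) ->
  mdeg e != 1%N -> (mdeg e < q)%N -> b@_e = 0.
Proof.
move=> red_b weight_b e1 lt_e; have [alpha alpha_e] := exists_expr_neq e1 lt_e.
have red_act : reduced q (actF (f alpha) b - f alpha *: b).
  apply/mboundedB/mboundedZ => //; apply/allP => m supp_m; apply: (allP red_b).
  move: supp_m; apply: contraLR.
  by rewrite -!mcoeff_eq0 mcoeff_actF => /eqP->; rewrite mul0r.
have := reduced_ideal_eq0 (finNzRing_gt1 F) red_act (weight_b alpha).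
move=> /(congr1 (mcoeff e)); rewrite mcoeffB mcoeffZ mcoeff_actF mcoeff0 mulrC -mulrBl.
move/eqP; rewrite mulf_eq0 subr_eq0 -rmorphXn (inj_eq (fmorph_inj f)).
by rewrite (negbTE alpha_e) => /eqP.
Qed.

End FrobeniusModule.

Lemma mcoeff_sub_linear_part (K : fieldType) n (b : {mpoly K[n]}) e :
  (b - \sum_(i < n) b@_U_(i) *: 'X_i)@_e = if mdeg e == 1%N then 0 else b@_e.
Proof.
rewrite mcoeffB raddf_sum /=; under eq_bigr => i _ do rewrite mcoeffZ mcoeffX.
case: ifPn => [/mdeg1P[i /eqP->]|e1].
  rewrite (bigD1 i) //= eqxx mulr1 big1 ?addr0 ?subrr // => l.
  by rewrite -eq_mnm1 => /negbTE->; rewrite mulr0.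
rewrite big1 ?subr0 // => i _; case: eqP => [eq_e|]; last by rewrite mulr0.
by move: e1; rewrite -eq_e mdeg1.
Qed.

Section Integrality.
Variables (K : fieldType) (v : K -> int).
Hypothesis v_discrete : discrete_valuation v.

HB.instance Definition _ :=
  GRing.isSubringClosed.Build K (vring v) (vring_subring_closed v_discrete).

Lemma OpolyP k (P : {mpoly K[k]}) : reflect (Opoly v P) (P \in mpolyOver k (vring v)).
Proof.
apply: (iffP idP) => [/mpolyOverP OP m | OP]; first exact/vringP/OP.
by apply/mpolyOverP => m; apply/vringP/OP.
Qed.

Lemma reduced_congI_Opoly k q (psi : 'M[K]_k) (P R : {mpoly K[k]}) : (1 < q)%N ->
  (forall i j, inO v (psi i j)) -> reduced q P -> congI (relators q psi) P R ->
  Opoly v R -> Opoly v P.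
Proof.
move=> q_gt1 psiO redP PR /OpolyP OR; apply/OpolyP.
by apply: (reduced_congI_over q_gt1 _ redP PR OR) => i j; apply/vringP.
Qed.

Lemma Opoly_sub_linear_part n q (b : {mpoly K[n]}) : (1 < q)%N -> reduced q b ->
  Opoly v (deltap b) -> (forall e, mdeg e != 1%N -> (mdeg e < q)%N -> b@_e = 0) ->
  Opoly v (b - \sum_(i < n) b@_U_(i) *: 'X_i).
Proof.
move=> q_gt1 /allP red_b /OpolyP Odb weight e; rewrite mcoeff_sub_linear_part.
case: ifPn => [_|e1]; first by left.
have [/existsP[i /existsP[j /and3P[ij ei ej]]]|single] :=
  boolP [exists i, exists j, [&& i != j, e i != 0%N & e j != 0%N]].
  rewrite -(mcoeff_deltap_isolate b ij ei ej); apply/vringP/mpolyOverP.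
  exact: isolate_over.
have [supp_e|/memN_msupp_eq0->] := boolP (e \in msupp b); last by left.
have /(le_mboxP q_gt1) lt_e := red_b e supp_e.
by rewrite weight //; [left | apply: mdeg_lt_single_support (ltnW q_gt1) lt_e single].
Qed.

End Integrality.

Theorem lemma1 (K : fieldType) (v : K -> int) (p : nat)
    (F : finFieldType) (f : {rmorphism F -> K})
    (n : nat) (phi : 'M[K]_n) (a : {mpoly K[n]}) :
  discrete_valuation v -> vcomplete v ->
  p \in [pchar K] -> perfect_residue v p ->
  (forall i j, inO v (phi i j)) -> \det phi != 0 ->
  (* delta^+ a lies in A[M] (x)_O A[M] *)
  (exists R : {mpoly K[n + n]},
      Opoly v R /\ congI (relsMM #|F| phi) (deltap a) R) ->
  (* [alpha] a = alpha a for all alpha in F_q *)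
  (forall alpha : F, congI (relsM #|F| phi) (actF (f alpha) a) (f alpha *: a)) ->
  exists a' : {mpoly K[n]},
    [/\ Opoly v a',
        congI (relsMM #|F| phi) (deltap a) (deltap a')
      & exists c : 'I_n -> K,
          congI (relsM #|F| phi) (a - a') (\sum_(i < n) c i *: 'X_i)].
Proof.
move=> v_discrete _ pK _ phiO _ [R [OR deltaR]] weight_a.
have q_gt1 := finNzRing_gt1 F.
pose b := reduceN #|F| phi (msize a) a.
have red_b : reduced #|F| b := reduceN_reduced phi q_gt1 (leqnn _).
have ab : congI (relsM #|F| phi) a b := congI_reduceN #|F| phi _ _.
have delta_ab : congI (relsMM #|F| phi) (deltap a) (deltap b).
  by apply/in_ideal_relsMM; rewrite /congI -deltapB; apply: (deltap_in_ideal f pK ab).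
have O_delta_b : Opoly v (deltap b).
  have phi2O : forall i j, inO v (phi2 phi i j) by apply: phi2_entries => //; left.
  have delta_bR : congI (relators #|F| (phi2 phi)) (deltap b) R.
    exact/in_ideal_relsMM/(congI_trans (congI_sym delta_ab) deltaR).
  exact (reduced_congI_Opoly v_discrete q_gt1 phi2O (deltap_reduced red_b) delta_bR OR).
have weight_b alpha : congI (relsM #|F| phi) (actF (f alpha) b) (f alpha *: b).
  apply: congI_trans (congI_actF (rmorph_expf_card f alpha) (congI_sym ab)) _.
  exact: congI_trans (weight_a alpha) (congIZ _ ab).
have weight_coef e : mdeg e != 1%N -> (mdeg e < #|F|)%N -> b@_e = 0.
  exact: reduced_weight_eq0 red_b weight_b.
exists (b - \sum_(i < n) b@_U_(i) *: 'X_i); split.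
- exact (Opoly_sub_linear_part v_discrete q_gt1 red_b O_delta_b weight_coef).
- by rewrite deltapB deltap_linear subr0.
- by exists (fun i => b@_U_(i)); rewrite /congI opprB addrA addrAC addrK.
Qed.
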